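(* If $p=p(n)\le \log n/(25n^2)$, then asymptotically almost surely there exists a generator $s\in S$ such that neither $s$ nor $s^{-1}$ occurs in any relation of the random presentation $\Gamma(n,p)=\langle S\mid R\rangle$.
   Context: The random triangular group $\Gamma(n,p)$ is given by a presentation $\langle S\mid R\rangle$, where $|S|=n$ and $R$ contains independently, each with probability $p$, every cyclically reduced word $abc$ of length three over $S\cup S^{-1}$ ($a\neq b^{-1}$, $b\neq c^{-1}$, $c\neq a^{-1}$; distinct words are distinct candidates). Asymptotically almost surely means with probability tending to $1$ as $n\to\infty$. *)

From HB Require Import structures.
From mathcomp Require Import all_boot all_order all_algebra.
From mathcomp Require Import all_classical all_reals all_analysis.
Set Implicit Arguments. Unset Strict Implicit. Unset Printing Implicit Defensive.
Import Order.TTheory GRing.Theory Num.Theory.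
Local Open Scope ring_scope.

(* A letter over S ∪ S^{-1}, with S = 'I_n: (generator, sign);
   (s, true) stands for s and (s, false) for s^{-1}. *)
Definition letter (n : nat) := ('I_n * bool)%type.
Definition linv (n : nat) (x : letter n) : letter n := (x.1, ~~ x.2).

Definition word (n : nat) := (letter n * letter n * letter n)%type.

Definition cyc_reduced (n : nat) (w : word n) : bool :=
  let: (a, b, c) := w in
  [&& a != linv b, b != linv c & c != linv a].

Definition cands (n : nat) : {set word n} := [set w | cyc_reduced w].

Definition occurs (n : nat) (s : 'I_n) (w : word n) : bool :=
  let: (a, b, c) := w in [|| a.1 == s, b.1 == s | c.1 == s].

Definition free_gen_event (n : nat) (Rel : {set word n}) : bool :=
  [exists s : 'I_n, [forall w in Rel, ~~ occurs s w]].

(* Probability of an event under Gamma(n,p): each candidate word is put in R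
   independently with probability p. *)
Definition prob_Gamma (R : realType) (n : nat) (p : R)
    (E : {set word n} -> bool) : R :=
  \sum_(Rel : {set word n} | Rel \subset cands n)
     p ^+ #|Rel| * (1 - p) ^+ (#|cands n| - #|Rel|) * (E Rel)%:R.

From HB Require Import structures.
From mathcomp Require Import all_boot all_order all_algebra.
From mathcomp Require Import all_classical all_reals all_analysis.
From mathcomp Require Import ring lra zify.
Set Implicit Arguments. Unset Strict Implicit. Unset Printing Implicit Defensive.
Import Order.TTheory GRing.Theory Num.Theory.
Import numFieldNormedType.Exports.
Local Open Scope ring_scope.

(* Second moment method. Let X count the generators s avoided by R, i.e. such
   that no relator lies in the set A_s of candidate words involving s. Then
   P(s avoided) = q^|A_s| with q = 1 - p, |A_s| <= 24 n^2, and two distinct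
   sets A_s, A_t share at most 96 n words. Hence E X >= n q^(24 n^2) and
   q^(96 n) E X^2 <= (E X)^2 + E X, so that by Chebyshev
   P(X = 0) <= E X^2 / (E X)^2 - 1 <= (1 + 1/E X) / q^(96 n) - 1.
   For p <= ln n / (25 n^2) one gets E X >= n^(1/50) and
   q^(96 n) >= 1 - 194 n^(-1/50), so P(X = 0) = O(n^(-1/50)). *)

Section BinomialRandomSubset.
Variables (R : realType) (T : finType) (C : {set T}) (p : R).
Local Notation q := (1 - p).

Definition bin_weight (J : {set T}) : R := p ^+ #|J| * q ^+ (#|C| - #|J|).

Definition bin_expect (f : {set T} -> R) : R :=
  \sum_(J : {set T} | J \subset C) bin_weight J * f J.

Definition bin_prob (E : {set T} -> bool) : R := bin_expect (fun J => (E J)%:R).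

(* Expand [\prod_(i in C) (p + q)] by distributivity; the terms of the
   expansion are the weights, with the factors [p] for [i \in D] removed. *)
Lemma bin_expect_avoid (D : {set T}) : D \subset C ->
  bin_expect (fun J => [disjoint J & D]%:R) = q ^+ #|D|.
Proof.
move=> DC.
pose F i := if i \in C then (if i \in D then 0 else p) else 0.
pose G i := if i \in C then q else 1.
have prodFG : \prod_i (F i + G i) = q ^+ #|D|.
  rewrite -prodr_const [RHS]big_mkcond /=; apply: eq_bigr => i _.
  rewrite /F /G; case: ifP => iC; case: ifP => iD; rewrite ?add0r ?subrKC //.
  by rewrite (fintype.subsetP DC _ iD) in iC.
rewrite /bin_expect -prodFG bigA_distr big_mkcond /=; apply: eq_bigr => J _.
have [JC|/subsetPn[i iJ /negbTE iC]] := boolP (J \subset C); last first.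
  by rewrite (bigD1 i) //= iJ /F iC mul0r.
have [JD|/pred0Pn[i /andP[/= iJ iD]]] := boolP [disjoint J & D]; last first.
  by rewrite (bigD1 i) //= iJ /F (fintype.subsetP JC _ iJ) iD mul0r mulr0.
rewrite mulr1 (bigID (mem J)) /=.
have -> : \prod_(i in J) (if i \in J then F i else G i) = p ^+ #|J|.
  rewrite -prodr_const; apply: eq_bigr => i iJ; rewrite iJ /F (fintype.subsetP JC _ iJ).
  by rewrite (disjointFr JD iJ).
have -> : \prod_(i | i \notin J) (if i \in J then F i else G i)
          = \prod_(i | (i \notin J) && (i \in C)) q.
  by rewrite big_mkcondr /=; apply: eq_bigr => i /negbTE ->.
rewrite prodr_const /bin_weight; congr (_ * _ ^+ _).
rewrite -{1}(finset.setIidPr JC) -cardsD.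
by apply: eq_card => i; rewrite !inE [RHS]unfold_in /= andbC.
Qed.

Lemma bin_expect1 : bin_expect (fun=> 1) = 1.
Proof.
rewrite -[RHS](expr0 q) -(cards0 T) -(@bin_expect_avoid _ (finset.sub0set C)).
by rewrite /bin_expect; apply: eq_bigr => J _; rewrite -setI_eq0 finset.setI0 eqxx.
Qed.

Hypothesis p01 : 0 <= p <= 1.

Lemma bin_weight_ge0 J : 0 <= bin_weight J.
Proof. by case/andP: p01 => p0 p1; rewrite mulr_ge0 ?exprn_ge0 ?subr_ge0. Qed.

Lemma bin_probC E : bin_prob (fun J => ~~ E J) = 1 - bin_prob E.
Proof.
rewrite -bin_expect1 /bin_prob /bin_expect -sumrB; apply: eq_bigr => J _.
by case: (E J); rewrite ?mulr0 ?mulr1 ?subr0 ?subrr.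
Qed.

Lemma bin_prob_le1 E : bin_prob E <= 1.
Proof.
rewrite -subr_ge0 -bin_probC sumr_ge0 // => J _.
by rewrite mulr_ge0 ?bin_weight_ge0.
Qed.

Lemma bin_expect_sqr_dev (X : {set T} -> R) :
  bin_expect (fun J => (X J - bin_expect X) ^+ 2)
    = bin_expect (fun J => X J ^+ 2) - bin_expect X ^+ 2.
Proof.
have := bin_expect1; rewrite /bin_expect; set mu := \sum_(J | _) _ * X J => sum1.
have -> : \sum_(J : {set T} | J \subset C) bin_weight J * (X J - mu) ^+ 2
    = \sum_(J : {set T} | J \subset C) bin_weight J * X J ^+ 2
      - mu *+ 2 * \sum_(J : {set T} | J \subset C) bin_weight J * X J
      + mu ^+ 2 * \sum_(J : {set T} | J \subset C) bin_weight J * 1.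
  by rewrite !mulr_sumr -sumrB -big_split; apply: eq_bigr => J _ /=; ring.
by rewrite sum1 -/mu; ring.
Qed.

(* Chebyshev: [X == 0] <= (X - mu)^2 / mu^2 pointwise. *)
Lemma second_moment {X : {set T} -> R} :
  0 < bin_expect X ->
  bin_prob (fun J => X J == 0)
    <= bin_expect (fun J => X J ^+ 2) / bin_expect X ^+ 2 - 1.
Proof.
set mu := bin_expect X => mu0.
have mu2 : mu ^+ 2 != 0 by rewrite expf_neq0 ?gt_eqF.
rewrite -[1](divff mu2) -mulrBl -bin_expect_sqr_dev /bin_expect mulr_suml.
apply: ler_sum => J _; rewrite -/mu -[leRHS]mulrA; apply: ler_wpM2l; first exact: bin_weight_ge0.
have [->|_] := eqVneq (X J) 0; last by rewrite divr_ge0 ?sqr_ge0.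
by rewrite sub0r sqrrN divff.
Qed.

Variables (I : finType) (A : I -> {set T}).
Hypothesis subA : forall i, A i \subset C.

Definition avoided_count (J : {set T}) : R := \sum_i [disjoint J & A i]%:R.

Lemma bin_expect_avoided_count :
  bin_expect avoided_count = \sum_i q ^+ #|A i|.
Proof.
rewrite /bin_expect; under eq_bigr do rewrite /avoided_count mulr_sumr.
by rewrite exchange_big /=; apply: eq_bigr => i _; apply: bin_expect_avoid.
Qed.

Lemma bin_expect_avoided_count2 :
  bin_expect (fun J => avoided_count J ^+ 2) = \sum_i \sum_j q ^+ #|A i :|: A j|.
Proof.
have subAU i j : A i :|: A j \subset C by rewrite finset.subUset !subA.
rewrite /bin_expect.
under eq_bigr do rewrite /avoided_count expr2 big_distrlr mulr_sumr.
rewrite exchange_big /=; apply: eq_bigr => i _.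
under eq_bigr do rewrite mulr_sumr.
rewrite exchange_big /=; apply: eq_bigr => j _.
rewrite -bin_expect_avoid //; apply: eq_bigr => J _.
by rewrite -natrM mulnb -!setI_eq0 finset.setIUr finset.setU_eq0.
Qed.

Lemma onem_p_ge0 : 0 <= q.
Proof. by case/andP: p01 => _; rewrite subr_ge0. Qed.

Lemma onem_p_le1 : q <= 1.
Proof. by case/andP: p01 => p0 _; rewrite lerBlDr lerDl. Qed.

(* Diagonal pairs give the [mu] term; off the diagonal [q^|A i :|: A j|]
   exceeds [q^|A i| q^|A j|] by at most the factor [q^-k]. *)
Lemma avoided_pairs_le (k : nat) :
  (forall i j, i != j -> #|A i :&: A j| <= k)%N ->
  q ^+ k * \sum_i \sum_j q ^+ #|A i :|: A j|
    <= (\sum_i q ^+ #|A i|) ^+ 2 + \sum_i q ^+ #|A i|.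
Proof.
move=> capA; rewrite expr2 mulr_suml mulr_sumr -big_split /=.
apply: ler_sum => i _; rewrite !mulr_sumr (bigD1 i) //= [in leRHS](bigD1 i) //=.
rewrite [leRHS]addrAC lerD //.
  rewrite finset.setUid -[X in X <= _]add0r lerD ?mulr_ge0 ?exprn_ge0 ?onem_p_ge0 //.
  by rewrite ler_piMl ?exprn_ge0 ?exprn_ile1 ?onem_p_ge0 ?onem_p_le1.
apply: ler_sum => j ji; rewrite -!exprD; apply: ler_wiXn2l; rewrite ?onem_p_ge0 ?onem_p_le1 //.
by rewrite -cardsUI addnC leq_add2r capA // eq_sym.
Qed.

Lemma avoided_mean_ge (m : nat) :
  (forall i, #|A i| <= m)%N -> #|I|%:R * q ^+ m <= \sum_i q ^+ #|A i|.
Proof.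
move=> cardA; rewrite mulr_natl -sumr_const; apply: ler_sum => i _.
by apply: ler_wiXn2l; rewrite ?onem_p_ge0 ?onem_p_le1.
Qed.

Lemma bin_prob_none_avoided_le (k : nat) :
  (forall i j, i != j -> #|A i :&: A j| <= k)%N -> p < 1 ->
  0 < bin_expect avoided_count ->
  bin_prob (fun J => avoided_count J == 0)
    <= (1 + (bin_expect avoided_count)^-1) / q ^+ k - 1.
Proof.
move=> capA p1 mu0; apply: le_trans (second_moment mu0) _; rewrite lerD2r.
rewrite bin_expect_avoided_count2.
move: mu0 (avoided_pairs_le capA); rewrite bin_expect_avoided_count.
set S2 := \sum_i \sum_j _; set mu := \sum_i _ => mu0 pairs.
have qk0 : 0 < q ^+ k by rewrite exprn_gt0 // subr_gt0.
have -> : (1 + mu^-1) / q ^+ k = (mu ^+ 2 + mu) / q ^+ k / mu ^+ 2.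
  by field; rewrite !gt_eqF.
by rewrite ler_pM2r ?invr_gt0 ?exprn_gt0 // ler_pdivlMr // mulrC.
Qed.

End BinomialRandomSubset.

Lemma leq_card_setU3 (T : finType) (A B D : {set T}) :
  (#|A :|: B :|: D| <= #|A| + #|B| + #|D|)%N.
Proof.
apply: leq_trans (leq_card_setU _ _) _.
by rewrite leq_add2r leq_card_setU.
Qed.

Section OccurrenceSets.
Variable n : nat.

Definition occ_words (s : 'I_n) : {set word n} := [set w in cands n | occurs s w].

Lemma occ_words_sub s : occ_words s \subset cands n.
Proof. by apply/fintype.subsetP => w; rewrite inE => /andP[]. Qed.

Local Notation box A B D := (finset.setX (finset.setX A B) D).

Lemma card_occ_words s : (#|occ_words s| <= 24 * n ^ 2)%N.
Proof.
pose L := finset.setX [set s] [set: bool]; pose LT := [set: letter n].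
have occ_cover :
    occ_words s \subset box L LT LT :|: box LT L LT :|: box LT LT L.
  apply/fintype.subsetP => -[[a b] c]; rewrite !inE /= => /andP[_].
  by case: (a.1 == s); case: (b.1 == s); case: (c.1 == s).
apply: (leq_trans (subset_leq_card occ_cover)); apply: (leq_trans (leq_card_setU3 _ _ _)).
by rewrite !cardsX !cardsT card_prod card_ord card_bool cards1; lia.
Qed.

(* A word meeting two distinct generators has two of its three letters over them. *)
Lemma card_occ_wordsI s t : s != t ->
  (#|occ_words s :&: occ_words t| <= 96 * n)%N.
Proof.
move=> st; pose L := finset.setX [set s; t] [set: bool]; pose LT := [set: letter n].
have occ_cover : occ_words s :&: occ_words t
    \subset box LT L L :|: box L LT L :|: box L L LT.
  apply/fintype.subsetP => -[[a b] c]; rewrite !inE /=.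
  have ha : (a.1 == s) ==> (a.1 != t) by apply/implyP => /eqP ->.
  have hb : (b.1 == s) ==> (b.1 != t) by apply/implyP => /eqP ->.
  have hc : (c.1 == s) ==> (c.1 != t) by apply/implyP => /eqP ->.
  move: ha hb hc; case: (a.1 == s); case: (a.1 == t);
  case: (b.1 == s); case: (b.1 == t); case: (c.1 == s); case: (c.1 == t);
  by rewrite /= ?andbF ?andbT ?orbT.
apply: (leq_trans (subset_leq_card occ_cover)); apply: (leq_trans (leq_card_setU3 _ _ _)).
by rewrite !cardsX !cardsT card_prod card_ord card_bool cards2 st; lia.
Qed.

Lemma disjoint_occ_words (J : {set word n}) s : J \subset cands n ->
  [disjoint J & occ_words s] = [forall w in J, ~~ occurs s w].
Proof.
move=> JC; rewrite disjoint_subset.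
apply/fintype.subsetP/forall_inP => [noJ w wJ|noocc w wJ].
  by move: (fintype.subsetP JC w wJ) (noJ w wJ); rewrite !inE => ->.
by rewrite !inE negb_and noocc ?orbT.
Qed.

Lemma free_gen_eventE (R : realType) (J : {set word n}) : J \subset cands n ->
  free_gen_event J = (avoided_count R occ_words J != 0).
Proof.
move=> JC; apply/idP/idP => [/existsP[s sfree]|].
  rewrite /avoided_count (bigD1 s) //= disjoint_occ_words // sfree.
  by rewrite paddr_eq0 ?sumr_ge0 // oner_eq0.
apply: contraTT => /existsPn nofree; rewrite negbK /avoided_count big1 // => s _.
by rewrite disjoint_occ_words // (negbTE (nofree s)).
Qed.

Lemma onem_prob_free_gen (R : realType) (p : R) : 0 <= p <= 1 ->
  1 - prob_Gamma p (@free_gen_event n)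
    = bin_prob (cands n) p (fun J => avoided_count R occ_words J == 0).
Proof.
move=> p01; rewrite -bin_probC //; apply: eq_bigr => J JC.
by rewrite (free_gen_eventE R JC) negbK.
Qed.

End OccurrenceSets.

Lemma expR_le_onemX (R : realType) (p : R) (k : nat) : 0 <= p < 1 ->
  expR (- (k%:R * (p / (1 - p)))) <= (1 - p) ^+ k.
Proof.
case/andP=> p0 p1; have q0 : 0 < 1 - p by rewrite subr_gt0.
rewrite -mulrN expRM_natl; apply: lerXn2r; rewrite ?nnegrE ?expR_ge0 ?(ltW q0) //.
rewrite expRN invf_ple ?posrE ?expR_gt0 //.
have qV : (1 - p)^-1 = 1 + p / (1 - p) by field; rewrite gt_eqF.
by rewrite [leLHS]qV expR_ge1Dx.
Qed.

Lemma moment_ratio_le (R : realFieldType) (mu r z : R) :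
  400 <= z -> z <= mu -> 1 - 194 / z <= r -> (1 + mu^-1) / r - 1 <= 400 / z.
Proof.
move=> z_ge mu_ge r_ge; have z_gt0 : 0 < z by lra.
have u_gt0 : 0 < z^-1 by rewrite invr_gt0.
have u_le : z^-1 <= 1 / 400 by rewrite -div1r ler_pdivrMr //; lra.
have mu_inv : mu^-1 <= z^-1 by rewrite lef_pV2 ?posrE //; lra.
rewrite lerBlDr ler_pdivrMr; nra.
Qed.

Section Asymptotics.
Variables (R : realType) (n : nat) (p : R).
Local Notation N := (n%:R : R).
Local Notation z := (expR (ln N / 50)).
Local Notation q := (1 - p).
Hypotheses (n_gt0 : (0 < n)%N) (p_ge0 : 0 <= p).
Hypothesis p_le : p <= ln N / (25 * N ^+ 2).
Hypothesis z_ge400 : 400 <= z.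

Lemma N_gt0 : 0 < N.
Proof. by rewrite ltr0n. Qed.

Lemma root50_expr : z ^+ 50 = N.
Proof.
rewrite -expRM_natl mulrC divfK ?pnatr_eq0 //.
by rewrite lnK // posrE N_gt0.
Qed.

Lemma ln_le_root50 : ln N <= 50 * z.
Proof.
by have := ln_sublinear (expR_gt0 (ln N / 50)); rewrite expRK; lra.
Qed.

Lemma N2p_le : 25 * N ^+ 2 * p <= ln N.
Proof.
by move: p_le; rewrite ler_pdivlMr ?mulr_gt0 ?exprn_gt0 ?N_gt0 // mulrC.
Qed.

(* From [25 N^2 p <= ln N <= 50 z] and [z^2 <= N]. *)
Lemma Np_root50_le2 : N * p * z <= 2.
Proof.
have z1 : 1 <= z by have := z_ge400; lra.
have z2N : z ^+ 2 <= z ^+ 50 by rewrite ler_weXn2l.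
rewrite root50_expr in z2N.
have N2p := le_trans N2p_le ln_le_root50.
have : 0 <= (N - z ^+ 2) * (N * p) by rewrite mulr_ge0 ?subr_ge0 // mulr_ge0 // ltW // N_gt0.
have := N_gt0; rewrite !expr2 in z2N N2p *; nra.
Qed.

Lemma p_le_inv200 : p <= 1 / 200.
Proof.
have Np0 : 0 <= N * p by rewrite mulr_ge0 // ltW // N_gt0.
have : 0 <= (N - 1) * p by rewrite mulr_ge0 // subr_ge0 ler1n.
have := Np_root50_le2; have := z_ge400; nra.
Qed.

Lemma p_ge0_lt1 : 0 <= p < 1.
Proof. by rewrite p_ge0 /=; have := p_le_inv200; lra. Qed.

Lemma p_ge0_le1 : 0 <= p <= 1.
Proof. by rewrite p_ge0 /=; have := p_le_inv200; lra. Qed.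

Lemma mean_occ_words_ge : z <= \sum_(s < n) q ^+ #|occ_words s|.
Proof.
apply: le_trans (avoided_mean_ge p_ge0_le1 (@card_occ_words n)); rewrite card_ord.
apply: le_trans (ler_wpM2l (ltW N_gt0) (expR_le_onemX _ p_ge0_lt1)).
have NE : expR (ln N) = N by rewrite lnK // posrE N_gt0.
rewrite -[X in _ <= X * _]NE -expRD ler_expR.
have ln_ge0 : 0 <= ln N by rewrite ln_ge0 // ler1n.
(* [q >= 199/200] and [25 N^2 p <= ln N] give [q^(24 n^2) >= N^(-49/50)]. *)
have p_q : 24 * N ^+ 2 * (p / q) <= 49 / 50 * ln N.
  have := p_le_inv200; have := N2p_le; have : 0 <= N ^+ 2 * p by rewrite mulr_ge0 ?exprn_ge0.
  rewrite mulrA ler_pdivrMr; last by have := p_le_inv200; lra.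
  nra.
by rewrite natrM natrX mulrA; lra.
Qed.

Lemma pair_factor_ge : 1 - 194 / z <= q ^+ (96 * n).
Proof.
have p1 := p_le_inv200; have z0 : 0 < z by rewrite expR_gt0.
apply: le_trans (expR_le_onemX _ p_ge0_lt1).
apply: le_trans (expR_ge1Dx _); rewrite lerD2l lerN2 natrM mulrA.
rewrite ler_pdivlMr; last lra.
rewrite mulrAC ler_pdivrMr //; have := Np_root50_le2; nra.
Qed.

Lemma prob_no_free_gen_le : 1 - prob_Gamma p (@free_gen_event n) <= 400 / z.
Proof.
have [_ p_lt1] := andP p_ge0_lt1.
have mean := bin_expect_avoided_count p (@occ_words_sub n).
have mean_gt0 : 0 < bin_expect (cands n) p (avoided_count R (@occ_words n)).
  by rewrite mean; apply: lt_le_trans mean_occ_words_ge; rewrite expR_gt0.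
rewrite (onem_prob_free_gen n p_ge0_le1).
apply: le_trans (bin_prob_none_avoided_le p_ge0_le1 (@occ_words_sub n)
  (@card_occ_wordsI n) p_lt1 mean_gt0) _.
by rewrite mean; apply: moment_ratio_le z_ge400 mean_occ_words_ge pair_factor_ge.
Qed.

End Asymptotics.

Local Open Scope classical_set_scope.
Local Open Scope ring_scope.

Lemma root50_ge (R : realType) (M : R) : 1 <= M ->
  \forall n \near \oo, M <= expR (ln (n%:R : R) / 50).
Proof.
move=> M1; near=> n.
have Mn : M ^+ 50 <= n%:R by near: n; apply: nbhs_infty_ger.
have n_gt0 : (0 < n)%N.
  by rewrite -(ltr_nat R); apply: lt_le_trans Mn; rewrite exprn_gt0 //; lra.
rewrite -(@ler_pXn2r _ 50) ?nnegrE ?expR_ge0 //; last lra.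
by rewrite root50_expr.
Unshelve. all: by end_near.
Qed.

Theorem lemma3p6 (R : realType) (p : nat -> R) :
  (forall n, 0 <= p n) ->
  (forall n, p n <= ln (n%:R) / (25 * (n%:R) ^+ 2)) ->
  (fun n : nat => @prob_Gamma R n (p n) (@free_gen_event n)) @ \oo --> (1 : R).
Proof.
move=> p_ge0 p_le; apply/cvgrPdist_le => eps eps_gt0.
set M := Num.max 400 (400 / eps).
have M_ge : 400 <= M /\ 400 / eps <= M by rewrite !le_max !lexx orbT.
near=> n.
have z_ge : M <= expR (ln (n%:R : R) / 50) by near: n; apply: root50_ge; lra.
have n_gt0 : (0 < n)%N by near: n; exact: nbhs_infty_gt.
have z_ge400 : 400 <= expR (ln (n%:R : R) / 50) by lra.
have p01 := p_ge0_le1 n_gt0 (p_ge0 n) (p_le n) z_ge400.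
rewrite ger0_norm ?subr_ge0; last exact: bin_prob_le1.
apply: le_trans (prob_no_free_gen_le n_gt0 (p_ge0 n) (p_le n) z_ge400) _.
rewrite ler_pdivrMr ?expR_gt0 //.
have [_] := M_ge; rewrite ler_pdivrMr // => M_eps; nra.
Unshelve. all: by end_near.
Qed.
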